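(* Let $G$ be a (possibly infinite) graph and $k$ a positive integer such that $G$ contains no path on $k$ vertices as a subgraph and every vertex of $G$ lies on fewer than $k$ pairwise edge-disjoint cycles. Then, whatever the cat's starting vertex and play, the herder can capture the cat after at most $k^3-2k^2+3k-2$ edge deletions; i.e. $\mathrm{cat}(G)\le k^3-2k^2+3k-2$.
   Context: Cat Herding is played on a simple, possibly infinite graph $G$. The cat first places its token on a vertex. Then the players alternate, the herder moving first: the herder deletes one edge of the current graph, and then, unless the cat's current vertex has degree $0$ in the current graph, the cat moves its token along a finite path with at least one edge in the current graph to a different vertex. The cat is captured when its vertex has degree $0$ in the current graph; the score is the number of edges deleted. $\mathrm{cat}(G)$ denotes the optimal score (herder minimizing, cat maximizing, cat choosing the start). *)

From Stdlib Require Import List Arith Relations.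
Import ListNotations.

Section Graphs.
Context {V : Type} (adj : V -> V -> Prop).

(* A simple graph: adj symmetric and irreflexive (assumed in the theorem). *)

Definition cur_adj (D : list (V * V)) (x y : V) : Prop :=
  adj x y /\ ~ In (x, y) D /\ ~ In (y, x) D.

Definition isolated (D : list (V * V)) (v : V) : Prop :=
  forall w, ~ cur_adj D v w.

(* herder_wins n D v : it is the herder's turn, edges D have been deleted,
   the cat sits at v; the herder can force capture using at most n further
   edge deletions, whatever the cat does. *)
Fixpoint herder_wins (n : nat) (D : list (V * V)) (v : V) : Prop :=
  match n with
  | 0 => isolated D v
  | S m => isolated D v \/
      exists x y, cur_adj D x y /\
        forall w, w <> v -> clos_trans V (cur_adj ((x, y) :: D)) v w ->
          herder_wins m ((x, y) :: D) w
  end.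

Definition cat_le (N : nat) : Prop := forall v, herder_wins N [] v.

Fixpoint is_walk (l : list V) : Prop :=
  match l with
  | x :: ((y :: _) as t) => adj x y /\ is_walk t
  | _ => True
  end.

Definition has_path_on (k : nat) : Prop :=
  exists l : list V, length l = k /\ NoDup l /\ is_walk l.

(* a cycle given by its cyclic vertex sequence *)
Definition is_cycle (c : list V) : Prop :=
  3 <= length c /\ NoDup c /\
  match c with x :: _ => is_walk (c ++ [x]) | [] => False end.

Fixpoint walk_edges (l : list V) : list (V * V) :=
  match l with
  | x :: ((y :: _) as t) => (x, y) :: walk_edges t
  | _ => []
  end.

Definition cycle_edges (c : list V) : list (V * V) :=
  match c with x :: _ => walk_edges (c ++ [x]) | [] => [] end.

Definition edge_disjoint (c1 c2 : list V) : Prop :=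
  forall x y, In (x, y) (cycle_edges c1) ->
    ~ In (x, y) (cycle_edges c2) /\ ~ In (y, x) (cycle_edges c2).

Definition on_k_disjoint_cycles (v : V) (k : nat) : Prop :=
  exists cs : list (list V), length cs = k /\
    Forall (fun c => is_cycle c /\ In v c) cs /\
    forall i j, i < j < k -> edge_disjoint (nth i cs []) (nth j cs []).

End Graphs.

From Stdlib Require Import List Arith Relations Lia Classical.
Import ListNotations.

(* The herder plays in phases, keeping the cat in the component of a root from which
   every path has at most d vertices; initially d <= k - 1.  A phase deletes the edges of
   a maximal family of edge-disjoint cycles through the root, fewer than k cycles on
   fewer than k vertices each, so that afterwards the root lies on no cycle.  Then every
   edge at the root is a bridge: after at most one deletion that forces the cat off the
   root, deleting the first edge of a root-cat path confines the cat to a component that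
   contains a vertex of depth at most d - 1.  Thus d phases of (k-1)^2 + 2 deletions
   suffice, and (k-1)((k-1)^2 + 2) <= k^3 - 2k^2 + 3k - 2. *)

Section Lists.
Context {A : Type}.

Lemma last_cons (a : A) l d : last (a :: l) d = last l a.
Proof.
  revert a d. induction l as [|b l IH]; intros a d; [reflexivity|].
  change (last (b :: l) d = last (b :: l) a). now rewrite !IH.
Qed.

Lemma last_app_cons l1 (a : A) l2 d : last (l1 ++ a :: l2) d = last l2 a.
Proof.
  revert d. induction l1 as [|x l1 IH]; intros d; [apply last_cons|].
  simpl (_ ++ _). rewrite last_cons. apply IH.
Qed.

Lemma last_In (a : A) l : In (last l a) (a :: l).
Proof.
  revert a. induction l as [|b l IH]; intros a; [now left|].
  rewrite last_cons. right. apply IH.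
Qed.

Lemma NoDup_firstn n (l : list A) : NoDup l -> NoDup (firstn n l).
Proof. rewrite <- (firstn_skipn n l) at 1. apply NoDup_app_remove_r. Qed.

Lemma in_split_first (P : A -> Prop) l : (exists u, In u l /\ P u) ->
  exists pre y post, l = pre ++ y :: post /\ (forall u, In u pre -> ~ P u) /\ P y.
Proof.
  induction l as [|a l IH]; intros [u [Hu Pu]]; [destruct Hu|].
  destruct (classic (P a)) as [Pa|Pa].
  - exists [], a, l. repeat split; [intros _ []|exact Pa].
  - destruct Hu as [<-|Hu]; [contradiction|].
    destruct IH as [pre [y [post [E [Hpre Py]]]]]; [now exists u|].
    exists (a :: pre), y, post. rewrite E. repeat split; [|exact Py].
    intros v [<-|Hv]; auto.
Qed.

End Lists.

Section Closures.
Context {V : Type}.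

Lemma clos_t_mono (R R' : V -> V -> Prop) a b :
  inclusion V R R' -> clos_trans V R a b -> clos_trans V R' a b.
Proof. intros HRS H. induction H; [apply t_step, HRS | eapply t_trans]; eauto. Qed.

Lemma clos_rt_mono (R R' : V -> V -> Prop) a b :
  inclusion V R R' -> clos_refl_trans V R a b -> clos_refl_trans V R' a b.
Proof.
  intros HRS H. induction H; [apply rt_step, HRS | apply rt_refl | eapply rt_trans]; eauto.
Qed.

Lemma clos_rt_sym (R : V -> V -> Prop) a b :
  symmetric V R -> clos_refl_trans V R a b -> clos_refl_trans V R b a.
Proof. intros HR H. induction H; [apply rt_step, HR | apply rt_refl | eapply rt_trans]; eauto. Qed.

Lemma clos_rt_t_neq (R : V -> V -> Prop) a b :
  clos_refl_trans V R a b -> a <> b -> clos_trans V R a b.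
Proof.
  intros H Hab. apply clos_rt_rtn1 in H. destruct H as [|c b Hcb Hac]; [congruence|].
  apply clos_rtn1_rt in Hac. eapply clos_rt_t; [exact Hac | now apply t_step].
Qed.

End Closures.

Section Walks.
Context {V : Type}.
Variable R : V -> V -> Prop.

Lemma is_walk_mono_in (R' : V -> V -> Prop) l :
  (forall a b, In a l -> In b l -> R a b -> R' a b) -> is_walk R l -> is_walk R' l.
Proof.
  induction l as [|a l IH]; intros HRS; [trivial|].
  destruct l as [|b l]; [trivial|]. intros [Hab Hl]. split.
  - apply HRS; simpl; auto.
  - apply IH; [|exact Hl]. intros u v Hu Hv. apply HRS; right; assumption.
Qed.

Lemma is_walk_mono (R' : V -> V -> Prop) l : inclusion V R R' -> is_walk R l -> is_walk R' l.
Proof. intros HRS. apply is_walk_mono_in. auto. Qed.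

Lemma is_walk_app l1 a l2 :
  is_walk R (l1 ++ a :: l2) <-> is_walk R (l1 ++ [a]) /\ is_walk R (a :: l2).
Proof.
  induction l1 as [|x l1 IH]; simpl; [tauto|].
  destruct l1 as [|y l1]; simpl in *; [tauto|]. rewrite IH. tauto.
Qed.

Lemma is_walk_firstn n l : is_walk R l -> is_walk R (firstn n l).
Proof.
  revert l. induction n as [|n IH]; intros l Hl; [exact I|].
  destruct l as [|a [|b l]]; destruct n; try exact I.
  destruct Hl as [Hab Hl]. split; [exact Hab|]. exact (IH (b :: l) Hl).
Qed.

Lemma is_walk_clos_rt a l u :
  is_walk R (a :: l) -> In u (a :: l) -> clos_refl_trans V R a u.
Proof.
  revert a. induction l as [|b l IH]; intros a Hl [<-|Hu]; try apply rt_refl.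
  - destruct Hu.
  - destruct Hl as [Hab Hl]. eapply rt_trans; [apply rt_step, Hab | exact (IH b Hl Hu)].
Qed.

Lemma clos_trans_path a b :
  clos_trans V R a b -> exists l, NoDup (a :: l) /\ is_walk R (a :: l) /\ last l a = b.
Proof.
  intros H. apply clos_trans_t1n in H. induction H as [a b Hab|a c b Hac _ IH].
  - destruct (classic (a = b)) as [<-|Hne].
    + exists []. repeat constructor. auto.
    + exists [b]. split; [|split; [split; [exact Hab | exact I] | reflexivity]].
      repeat constructor; simpl; intuition.
  - destruct IH as [l [Hnd [Hw Hlast]]].
    destruct (classic (In a (c :: l))) as [Ha|Ha].
    + destruct (in_split _ _ Ha) as [l1 [l2 E]].
      rewrite E in Hnd, Hw. rewrite <- last_cons with (d := c), E, last_app_cons in Hlast.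
      exists l2. split; [|split; [|exact Hlast]].
      * eapply NoDup_app_remove_l; exact Hnd.
      * now apply is_walk_app in Hw.
    + exists (c :: l). split; [constructor; assumption|].
      split; [split; assumption|]. now rewrite last_cons.
Qed.

End Walks.

Section Cycles.
Context {V : Type}.
Variable R : V -> V -> Prop.

Lemma walk_edges_rel l a b : is_walk R l -> In (a, b) (walk_edges l) -> R a b.
Proof.
  induction l as [|x [|y l] IH]; simpl; try tauto.
  intros [Hxy Hl] [E|H]; [now injection E as <- <- | auto].
Qed.

Lemma length_walk_edges (l : list V) : length (walk_edges l) = length l - 1.
Proof.
  induction l as [|x [|y l] IH]; simpl; auto. simpl in IH. rewrite IH. lia.
Qed.

Lemma length_cycle_edges (c : list V) : length (cycle_edges c) = length c.
Proof.
  destruct c as [|x t]; [reflexivity|]. unfold cycle_edges.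
  rewrite length_walk_edges, length_app. simpl. lia.
Qed.

Lemma cycle_edges_rel c a b : is_cycle R c -> In (a, b) (cycle_edges c) -> R a b.
Proof.
  destruct c as [|x t]; [intros [_ [_ []]]|]. intros [_ [_ Hw]]. now apply walk_edges_rel.
Qed.

Lemma is_cycle_mono (R' : V -> V -> Prop) c :
  inclusion V R R' -> is_cycle R c -> is_cycle R' c.
Proof.
  intros HRS [Hlen [Hnd Hw]]. split; [exact Hlen|]. split; [exact Hnd|].
  destruct c; [exact Hw|]. eapply is_walk_mono; eassumption.
Qed.

Lemma is_cycle_path c : is_cycle R c -> NoDup c /\ is_walk R c.
Proof.
  intros [_ [Hnd Hw]]. split; [exact Hnd|]. destruct c as [|x t]; [contradiction|].
  apply (is_walk_firstn _ (length (x :: t))) in Hw.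
  now rewrite firstn_app, firstn_all, Nat.sub_diag, app_nil_r in Hw.
Qed.

Definition no_cycle_through (x : V) : Prop := forall c, is_cycle R c -> ~ In x c.

End Cycles.

Lemma no_cycle_through_mono {V} (R R' : V -> V -> Prop) x :
  inclusion V R' R -> no_cycle_through R x -> no_cycle_through R' x.
Proof. intros HR Hacyc c Hc. apply Hacyc. eapply is_cycle_mono; eassumption. Qed.

Lemma path_length_lt {V} (adj : V -> V -> Prop) k l :
  ~ has_path_on adj k -> NoDup l -> is_walk adj l -> length l < k.
Proof.
  intros no_path Hnd Hw. destruct (Nat.lt_ge_cases (length l) k) as [Hk|Hk]; [exact Hk|].
  exfalso. apply no_path.
  exists (firstn k l). split; [now apply firstn_length_le|].
  split; [now apply NoDup_firstn | now apply is_walk_firstn].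
Qed.

Section CycleFamilies.
Context {V : Type}.
Variables (R : V -> V -> Prop) (x : V).

Definition disjoint_cycles_at (fam : list (list V)) : Prop :=
  Forall (fun c => is_cycle R c /\ In x c) fam /\
  forall i j, i < j < length fam -> edge_disjoint (nth i fam []) (nth j fam []).

Lemma disjoint_cycles_at_length_lt (adj : V -> V -> Prop) k fam :
  inclusion V R adj -> ~ on_k_disjoint_cycles adj x k ->
  disjoint_cycles_at fam -> length fam < k.
Proof.
  intros HR few [Hcyc Hdisj].
  destruct (Nat.lt_ge_cases (length fam) k) as [Hk|Hk]; [exact Hk|].
  exfalso. apply few. exists (firstn k fam). split; [now apply firstn_length_le|]. split.
  - rewrite Forall_forall in *. intros c Hc.
    destruct (Hcyc c) as [Hc' Hx].
    { rewrite <- (firstn_skipn k fam). apply in_or_app. now left. }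
    split; [eapply is_cycle_mono; eassumption | exact Hx].
  - intros i j Hij. rewrite !nth_firstn.
    replace (i <? k) with true by (symmetry; apply Nat.ltb_lt; lia).
    replace (j <? k) with true by (symmetry; apply Nat.ltb_lt; lia).
    apply Hdisj. lia.
Qed.

Lemma disjoint_cycles_at_maximal k :
  (forall fam, disjoint_cycles_at fam -> length fam < k) ->
  exists fam, disjoint_cycles_at fam /\ forall c, ~ disjoint_cycles_at (fam ++ [c]).
Proof.
  intros Hbound.
  assert (Hext : forall n fam, disjoint_cycles_at fam -> k - length fam <= n ->
    exists fam', disjoint_cycles_at fam' /\ forall c, ~ disjoint_cycles_at (fam' ++ [c])).
  { induction n as [|n IH]; intros fam Hfam Hn.
    - specialize (Hbound fam Hfam). lia.
    - destruct (classic (exists c, disjoint_cycles_at (fam ++ [c]))) as [[c Hc]|Hmax].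
      + apply (IH _ Hc). specialize (Hbound _ Hc). rewrite length_app in *. simpl in *. lia.
      + exists fam. split; [exact Hfam|]. intros c Hc. apply Hmax. now exists c. }
  apply (Hext k []); [|simpl; lia].
  split; [constructor | simpl; lia].
Qed.

(* A maximal family meets every cycle through [x] in an edge. *)
Lemma maximal_disjoint_cycles_cover (R' : V -> V -> Prop) fam :
  symmetric V R' -> inclusion V R' R ->
  disjoint_cycles_at fam -> (forall c, ~ disjoint_cycles_at (fam ++ [c])) ->
  (forall a b, In (a, b) (flat_map cycle_edges fam) -> ~ R' a b) ->
  no_cycle_through R' x.
Proof.
  intros HS HSR [Hcyc Hdisj] Hmax Hcut c Hc Hx. apply (Hmax c). split.
  - apply Forall_app. split; [exact Hcyc|]. constructor; [|constructor].
    split; [eapply is_cycle_mono; eassumption | exact Hx].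
  - intros i j Hij. rewrite length_app in Hij. simpl in Hij. rewrite app_nth1 by lia.
    destruct (Nat.lt_ge_cases j (length fam)) as [Hj|Hj].
    + rewrite app_nth1 by lia. apply Hdisj. lia.
    + replace j with (length fam) by lia. rewrite nth_middle. intros a b Hab.
      assert (Hcut_ab : ~ R' a b).
      { apply Hcut, in_flat_map. exists (nth i fam []). split; [apply nth_In; lia | exact Hab]. }
      split; intros Hin; apply Hcut_ab; [|apply HS]; eapply cycle_edges_rel; eassumption.
Qed.

Lemma length_disjoint_cycles_edges (adj : V -> V -> Prop) k fam :
  inclusion V R adj -> ~ has_path_on adj k -> disjoint_cycles_at fam ->
  length (flat_map cycle_edges fam) <= length fam * (k - 1).
Proof.
  intros HR no_path [Hcyc _]. induction Hcyc as [|c fam [Hc _] _ IH]; simpl; [lia|].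
  rewrite length_app, length_cycle_edges.
  destruct (is_cycle_path _ _ Hc) as [Hnd Hw].
  pose proof (path_length_lt adj k c no_path Hnd (is_walk_mono _ _ _ HR Hw)). lia.
Qed.

End CycleFamilies.

Section Depth.
Context {V : Type}.

Definition path_depth_le (R : V -> V -> Prop) (d : nat) (x : V) : Prop :=
  forall t, NoDup (x :: t) -> is_walk R (x :: t) -> length (x :: t) <= d.

(* Deleting edges of [R] that separate [x] from [w] leaves [w] in a component rooted at
   a vertex of smaller depth: the first vertex [y] of an [x]-[w] path lying in that
   component, since each path from [y] extends the [x]-[y] prefix to a longer path. *)
Lemma path_depth_le_reroot (R R' : V -> V -> Prop) d x w :
  symmetric V R' -> inclusion V R' R ->
  path_depth_le R (S d) x -> clos_refl_trans V R x w -> ~ clos_refl_trans V R' x w ->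
  exists y, path_depth_le R' d y /\ clos_refl_trans V R' y w.
Proof.
  intros Hsym Hincl Hdepth Hxw Hsep.
  assert (Hne : x <> w) by (intros <-; apply Hsep, rt_refl).
  destruct (clos_trans_path R x w (clos_rt_t_neq _ _ _ Hxw Hne)) as [l [Hnd [Hw Hlast]]].
  set (C := fun u => clos_refl_trans V R' u w).
  destruct (in_split_first C (x :: l)) as [pre [y [post [E [Hpre Hy]]]]].
  { exists w. split; [rewrite <- Hlast; apply last_In | apply rt_refl]. }
  exists y. split; [|exact Hy].
  destruct pre as [|x' pre]; simpl in E; injection E as <- E; [contradiction|].
  intros t Hndt Hwt.
  assert (HC : forall u, In u (y :: t) -> C u).
  { intros u Hu. eapply rt_trans; [|exact Hy].
    apply clos_rt_sym; [exact Hsym|]. exact (is_walk_clos_rt _ _ _ _ Hwt Hu). }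
  rewrite E in Hnd, Hw.
  change (x :: pre ++ y :: post) with ((x :: pre) ++ y :: post) in Hnd, Hw.
  assert (Hlen : length ((x :: pre) ++ y :: t) <= S d).
  { apply (Hdepth (pre ++ y :: t)).
    - change (NoDup ((x :: pre) ++ y :: t)).
      apply NoDup_app; [exact (NoDup_app_remove_r _ _ Hnd) | exact Hndt |].
      intros u Hu Hu'. exact (Hpre u Hu (HC u Hu')).
    - change (is_walk R ((x :: pre) ++ y :: t)).
      apply is_walk_app. split; [now apply is_walk_app in Hw|].
      eapply is_walk_mono; eassumption. }
  rewrite length_app in Hlen. simpl in Hlen |- *. lia.
Qed.

End Depth.

Section Game.
Context {V : Type} (adj : V -> V -> Prop).
Hypothesis adj_sym : symmetric V adj.
Hypothesis adj_irrefl : forall x, ~ adj x x.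

Notation cur := (cur_adj adj).

Lemma cur_adj_incl D : inclusion V (cur D) adj.
Proof. intros x y Hxy. apply Hxy. Qed.

Lemma cur_adj_sym D : symmetric V (cur D).
Proof. intros x y [Hxy [H1 H2]]. split; [apply adj_sym, Hxy | tauto]. Qed.

Lemma cur_adj_cons D a b x y :
  cur ((a, b) :: D) x y <-> cur D x y /\ (a, b) <> (x, y) /\ (a, b) <> (y, x).
Proof. unfold cur_adj; simpl. intuition. Qed.

Lemma cur_adj_cons_incl e D : inclusion V (cur (e :: D)) (cur D).
Proof. destruct e as [a b]. intros x y. rewrite cur_adj_cons. tauto. Qed.

Lemma herder_wins_S n D v : herder_wins adj n D v -> herder_wins adj (S n) D v.
Proof.
  revert D v. induction n as [|n IH]; intros D v H; [now left|].
  destruct H as [H|[x [y [Hxy Hmove]]]]; [now left|].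
  right. exists x, y. split; [exact Hxy|]. intros w Hwv Hvw. apply IH, Hmove; assumption.
Qed.

Lemma herder_wins_le n n' D v : n <= n' -> herder_wins adj n D v -> herder_wins adj n' D v.
Proof. intros Hle. induction Hle; auto using herder_wins_S. Qed.

Lemma herder_wins_delete_all (L : list (V * V)) m D v :
  (forall D' w, inclusion V (cur D') (cur D) ->
     (forall a b, In (a, b) L -> ~ cur D' a b) ->
     clos_refl_trans V (cur D) v w -> herder_wins adj m D' w) ->
  herder_wins adj (length L + m) D v.
Proof.
  revert D v. induction L as [|[a b] L IH]; intros D v Hwin.
  - apply Hwin; [intros x y; trivial | intros _ _ [] | apply rt_refl].
  - simpl length. destruct (classic (cur D a b)) as [Hab|Hab].
    + right. exists a, b. split; [exact Hab|]. intros w _ Hvw. apply IH.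
      intros D' u Hsub Hcut Hwu. apply Hwin.
      * intros x y Hxy. exact (cur_adj_cons_incl _ _ _ _ (Hsub _ _ Hxy)).
      * intros x y [E|Hxy]; [injection E as <- <-|exact (Hcut _ _ Hxy)].
        intros Hab'. apply Hsub in Hab'. rewrite cur_adj_cons in Hab'. tauto.
      * apply rt_trans with w.
        -- apply clos_t_clos_rt. eapply clos_t_mono; [apply cur_adj_cons_incl | exact Hvw].
        -- eapply clos_rt_mono; [apply cur_adj_cons_incl | exact Hwu].
    + apply herder_wins_S, IH. intros D' w Hsub Hcut Hvw. apply Hwin; [exact Hsub| |exact Hvw].
      intros x y [E|Hxy]; [injection E as <- <-|exact (Hcut _ _ Hxy)].
      intros Hab'. exact (Hab (Hsub _ _ Hab')).
Qed.

(* If no cycle passes through [x], the first edge [xz] of an [x]-[w] path is a bridge: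
   otherwise a [z]-[x] path avoiding [xz], closed by [xz], would be such a cycle. *)
Lemma acyclic_vertex_bridge D x w :
  no_cycle_through (cur D) x -> w <> x -> clos_trans V (cur D) x w ->
  exists z, cur D x z /\ ~ clos_refl_trans V (cur ((x, z) :: D)) x w.
Proof.
  intros Hacyc Hwx Hxw.
  destruct (clos_trans_path _ _ _ Hxw) as [l [Hnd [Hw Hlast]]].
  destruct l as [|z t]; [simpl in Hlast; congruence|]. destruct Hw as [Hxz Hw].
  rewrite last_cons in Hlast. exists z. split; [exact Hxz|]. intros Hreach.
  set (D' := (x, z) :: D) in *.
  assert (Hx : ~ In x (z :: t)) by (inversion Hnd; assumption).
  assert (HzD : z <> x) by (intros ->; exact (adj_irrefl x (proj1 Hxz))).
  assert (Hw' : is_walk (cur D') (z :: t)).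
  { apply (is_walk_mono_in (cur D)); [|exact Hw]. intros a b Ha Hb Hab.
    apply cur_adj_cons. split; [exact Hab|]. split; intros E; injection E as -> ->; auto. }
  assert (Hzx : clos_trans V (cur D') z x).
  { apply clos_rt_t_neq; [|exact HzD]. apply rt_trans with w.
    - rewrite <- Hlast. apply (is_walk_clos_rt _ _ _ _ Hw'), last_In.
    - apply clos_rt_sym; [apply cur_adj_sym | exact Hreach]. }
  destruct (clos_trans_path _ _ _ Hzx) as [q [Hndq [Hwq Hlastq]]].
  pose proof (app_removelast_last z (l := z :: q) ltac:(discriminate)) as Ezq.
  rewrite last_cons, Hlastq in Ezq. set (r := removelast (z :: q)) in Ezq.
  apply (Hacyc (x :: r)); [|now left]. split; [|split].
  - destruct q as [|q1 [|q2 q]]; [simpl in Hlastq; congruence| |].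
    + simpl in Hlastq. subst q1. destruct Hwq as [Hzx' _].
      apply cur_adj_cons in Hzx'. tauto.
    + apply (f_equal (@length V)) in Ezq. rewrite length_app in Ezq. simpl in Ezq |- *. lia.
  - rewrite Ezq in Hndq. constructor.
    + intros Hin. apply (NoDup_remove_2 r [] x Hndq). now rewrite app_nil_r.
    + exact (NoDup_app_remove_r _ _ Hndq).
  - change (is_walk (cur D) (x :: (r ++ [x]))). rewrite <- Ezq.
    split; [exact Hxz|]. eapply is_walk_mono; [apply cur_adj_cons_incl | exact Hwq].
Qed.

End Game.

Section Strategy.
Context {V : Type} (adj : V -> V -> Prop).
Hypothesis adj_sym : symmetric V adj.
Hypothesis adj_irrefl : forall x, ~ adj x x.
Variable k : nat.
Hypothesis no_path : ~ has_path_on adj k.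
Hypothesis few_cycles : forall v, ~ on_k_disjoint_cycles adj v k.

Notation cur := (cur_adj adj).
Let cur_sym := cur_adj_sym adj adj_sym.

(* At most [k - 1] cycles of at most [k - 1] edges each, plus two bridge deletions. *)
Definition phase_cost : nat := (k - 1) * (k - 1) + 2.

Definition herds_from (n d : nat) : Prop :=
  forall D x v, path_depth_le (cur D) d x -> clos_refl_trans V (cur D) x v ->
    herder_wins adj n D v.

Lemma herds_from_0 n : herds_from n 0.
Proof.
  intros D x v Hdepth _. exfalso.
  specialize (Hdepth [] ltac:(repeat constructor; intros []) I). simpl in Hdepth. lia.
Qed.

Lemma herder_wins_cut_bridge n d D D' x w :
  herds_from n d -> path_depth_le (cur D) (S d) x -> inclusion V (cur D') (cur D) ->
  no_cycle_through (cur D') x -> w <> x -> clos_trans V (cur D') x w ->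
  herder_wins adj (S n) D' w.
Proof.
  intros IH Hdepth Hsub Hacyc Hwx Hxw.
  destruct (acyclic_vertex_bridge adj adj_sym adj_irrefl D' x w Hacyc Hwx Hxw) as [z [Hxz Hcut]].
  right. exists x, z. split; [exact Hxz|]. intros w' _ Hww'.
  assert (Hsub' : inclusion V (cur ((x, z) :: D')) (cur D)).
  { intros a b Hab. apply Hsub. eapply cur_adj_cons_incl. exact Hab. }
  destruct (path_depth_le_reroot (cur D) (cur ((x, z) :: D')) d x w')
    as [y [Hdepth' Hyw']]; [apply cur_sym | exact Hsub' | exact Hdepth | | |].
  - apply clos_t_clos_rt. apply t_trans with w.
    + eapply clos_t_mono; [exact Hsub | exact Hxw].
    + eapply clos_t_mono; [exact Hsub' | exact Hww'].
  - intros Hxw'. apply Hcut. apply rt_trans with w'; [exact Hxw'|].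
    apply clos_rt_sym; [apply cur_sym|]. now apply clos_t_clos_rt.
  - exact (IH _ _ _ Hdepth' Hyw').
Qed.

Lemma herder_wins_acyclic n d D D1 x w :
  herds_from n d -> path_depth_le (cur D) (S d) x -> inclusion V (cur D1) (cur D) ->
  no_cycle_through (cur D1) x -> clos_refl_trans V (cur D) x w ->
  herder_wins adj (S (S n)) D1 w.
Proof.
  intros IH Hdepth Hsub Hacyc Hxw.
  destruct (classic (clos_refl_trans V (cur D1) x w)) as [Hxw1|Hsep].
  - destruct (classic (w = x)) as [->|Hwx].
    + destruct (classic (isolated adj D1 x)) as [Hiso|Hiso]; [now left|].
      apply not_all_not_ex in Hiso. destruct Hiso as [y Hxy].
      right. exists x, y. split; [exact Hxy|]. intros w' Hw'x Hxw'.
      eapply herder_wins_cut_bridge; [exact IH | exact Hdepth | | | exact Hw'x | exact Hxw'].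
      * intros a b Hab. apply Hsub. eapply cur_adj_cons_incl. exact Hab.
      * eapply no_cycle_through_mono; [apply cur_adj_cons_incl | exact Hacyc].
    + apply herder_wins_S. eapply herder_wins_cut_bridge; try eassumption.
      apply clos_rt_t_neq; [exact Hxw1 | congruence].
  - destruct (path_depth_le_reroot (cur D) (cur D1) d x w (cur_sym D1)
      Hsub Hdepth Hxw Hsep) as [y [Hdepth' Hyw]].
    apply (herder_wins_le adj n); [lia|]. exact (IH _ _ _ Hdepth' Hyw).
Qed.

Lemma herds_from_S n d : herds_from n d -> herds_from (phase_cost + n) (S d).
Proof.
  intros IH D x v Hdepth Hxv.
  assert (Hbound : forall fam, disjoint_cycles_at (cur D) x fam -> length fam < k).
  { intros fam. apply (disjoint_cycles_at_length_lt _ _ adj); [apply cur_adj_incl | auto]. }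
  destruct (disjoint_cycles_at_maximal (cur D) x k Hbound) as [fam [Hfam Hmax]].
  pose proof (length_disjoint_cycles_edges _ x adj k fam (cur_adj_incl adj D) no_path Hfam).
  pose proof (Hbound fam Hfam).
  apply (herder_wins_le adj (length (flat_map cycle_edges fam) + S (S n))).
  { unfold phase_cost. nia. }
  apply herder_wins_delete_all. intros D1 w Hsub Hcut Hvw.
  eapply herder_wins_acyclic; [exact IH | exact Hdepth | exact Hsub | |].
  - eapply maximal_disjoint_cycles_cover; try eassumption. apply cur_sym.
  - eapply rt_trans; eassumption.
Qed.

Lemma herds_from_depth d : herds_from (d * phase_cost) d.
Proof.
  induction d as [|d IH]; [apply herds_from_0|].
  rewrite Nat.mul_succ_l, Nat.add_comm. now apply herds_from_S.
Qed.

End Strategy.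

Theorem mainTheorem18 (V : Type) (adj : V -> V -> Prop)
  (adj_sym : forall x y, adj x y -> adj y x)
  (adj_irrefl : forall x, ~ adj x x)
  (k : nat) (hk : 0 < k)
  (no_path : ~ has_path_on adj k)
  (few_cycles : forall v, ~ on_k_disjoint_cycles adj v k) :
  cat_le adj (k * k * k + 3 * k - (2 * k * k + 2)).
Proof.
  intros v.
  apply (herder_wins_le adj ((k - 1) * phase_cost k)).
  { unfold phase_cost. destruct k as [|j]; [lia|]. replace (S j - 1) with j by lia. nia. }
  apply (herds_from_depth adj adj_sym adj_irrefl k no_path few_cycles (k - 1) [] v v);
    [|apply rt_refl].
  intros t Hnd Hw.
  apply (is_walk_mono _ adj) in Hw; [|apply cur_adj_incl].
  pose proof (path_length_lt adj k (v :: t) no_path Hnd Hw). lia.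
Qed.
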